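(* Let $\tau\in\mathcal T_1$ and $t>0$ with $2/t$ not a positive integer. If $\psi$ is an Ad-invariant distribution on $SU(2)$ such that $z\mapsto|C^\tau_t(\psi)(d(z))|^2|\sigma(z)|^2\exp(-\frac{4\pi}{t\tau_2}(\mathrm{Im}\,z)^2)$ is invariant under $z\mapsto z+\tau$, then $\psi=0$.
   Context: $d(z)=\mathrm{diag}(e^{2\pi iz},e^{-2\pi iz})$, $\sigma(z)=e^{2\pi iz}-e^{-2\pi iz}$. $\chi_m$ ($m\ge0$) the character of the $(m+1)$-dimensional irreducible representation of $SU(2)$, $c_m=((m+1)^2-1)/2$. Ad-invariant distribution: formal series $\psi=\sum_{m\ge0}a_m\chi_m$ with $|a_m|(1+m^2)^{-N}\to0$ for some $N$. $\mathcal T_1=\{\mathrm{Im}\,\tau>0\}$, $\tau_2=\mathrm{Im}\,\tau$, $C^\tau_t(\psi)(g)=\sum_ma_me^{i\pi\tau tc_m}\chi_m(g)$, $g\in SL(2,\mathbb C)$. *)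

From Stdlib Require Import Reals.
From Coquelicot Require Import Coquelicot.
Open Scope R_scope.

Notation CC := Complex.C.

Definition cexp (z : CC) : CC :=
  (exp (Re z) * cos (Im z), exp (Re z) * sin (Im z)).

(* d(z) = diag(e^{2 pi i z}, e^{-2 pi i z}); the character chi_m of the
   (m+1)-dim irrep of SU(2) (Sym^m of the standard rep), extended to SL(2,C),
   evaluated at d(z):  sum_{k=0}^m e^{2 pi i (m-2k) z}. *)
Definition chi_d (m : nat) (z : CC) : CC :=
  sum_n (fun k => cexp (Cmult (RtoC (2 * PI * (INR m - 2 * INR k))) (Cmult Ci z))) m.

Definition sigma (z : CC) : CC :=
  Cminus (cexp (Cmult (RtoC (2 * PI)) (Cmult Ci z)))
         (cexp (Cmult (RtoC (- (2 * PI))) (Cmult Ci z))).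

Definition cm (m : nat) : R := ((INR m + 1) ^ 2 - 1) / 2.

(* Ad-invariant distribution: coefficient sequence of psi = sum a_m chi_m
   with |a_m| (1+m^2)^{-N} -> 0 for some N. *)
Definition ad_inv_distribution (a : nat -> CC) : Prop :=
  exists N : nat, is_lim_seq (fun m => Cmod (a m) / (1 + INR m ^ 2) ^ N) 0.

Definition heat_term (a : nat -> CC) (tau : CC) (t : R) (z : CC) (m : nat) : CC :=
  Cmult (Cmult (a m) (cexp (Cmult (Cmult Ci (RtoC (PI * t * cm m))) tau))) (chi_d m z).

(* C^tau_t(psi)(d(z)) = sum_m a_m e^{i pi tau t c_m} chi_m(d(z)), the (absolutely
   convergent) complex series summed componentwise. *)
Definition heat_op (a : nat -> CC) (tau : CC) (t : R) (z : CC) : CC :=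
  (Series (fun m => Re (heat_term a tau t z m)),
   Series (fun m => Im (heat_term a tau t z m))).

Definition weighted_density (a : nat -> CC) (tau : CC) (t : R) (z : CC) : R :=
  Cmod (heat_op a tau t z) ^ 2 * Cmod (sigma z) ^ 2
  * exp (- (4 * PI / (t * Im tau)) * Im z ^ 2).

(* Let [β_m = a_m e^{iπτ t c_m}] and [H(z) = C^τ_t(ψ)(d z) σ(z)]; since [χ_m σ] telescopes,
   [H(z) = Σ_m β_m (e^{2πi(m+1)z} - e^{-2πi(m+1)z})], and the Gaussian decay of [β_m]
   makes all the series below converge absolutely for every [z].  With [κ = 4π/(t τ₂)] the
   hypothesis reads [|H(z+τ)|² e^{-κ(y+τ₂)²} = |H(z)|² e^{-κy²}].  For fixed [x] both sides are,
   as functions of [y], exponential sums [Σ_{i,j} d_ij e^{w_ij y}]; agreeing for all real [y],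
   they have the same moments [Σ d_ij w_ij^k], hence agree after continuation to [y = i/2].
   That continuation shifts [x] by 1/2 and turns the Gaussian factor into [cos (4π/t)], giving
   [cos (4π/t) |H(x)|² = |H(x)|²] on the real axis.  As [2/t] is not a positive integer,
   [cos (4π/t) ≠ 1], so [H] vanishes on [ℝ], where [H(x) = 2i Σ_m β_m sin (2π(m+1)x)];
   discrete orthogonality of sines then kills every [β_m], hence every [a_m]. *)

From Pilot Require Import Defs.
From Stdlib Require Import Reals Factorial ZArith Lra Lia.
From Coquelicot Require Import Coquelicot.
Open Scope R_scope.

Lemma ex_series_Rabs_le (a b : nat -> R) :
  (forall n, Rabs (a n) <= b n) -> ex_series b -> ex_series a.
Proof. exact (ex_series_le a b). Qed.

Lemma Un_cv_Series (a : nat -> R) : ex_series a -> Un_cv (sum_f_R0 a) (Series a).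
Proof. intro H. apply is_series_Reals, Series_correct, H. Qed.

Lemma sum_f_R0_le_mono (a : nat -> R) (N M : nat) :
  (forall n, 0 <= a n) -> (N <= M)%nat -> sum_f_R0 a N <= sum_f_R0 a M.
Proof. intros Ha H. induction H as [|M _ IH]; simpl; [lra|]. specialize (Ha (S M)). lra. Qed.

Lemma sum_f_R0_le_Series (a : nat -> R) (N : nat) :
  (forall n, 0 <= a n) -> ex_series a -> sum_f_R0 a N <= Series a.
Proof. intros Ha He. apply sum_incr; [apply Un_cv_Series|]; assumption. Qed.

Lemma term_le_sum_f_R0 (a : nat -> R) (k N : nat) :
  (forall n, 0 <= a n) -> (k <= N)%nat -> a k <= sum_f_R0 a N.
Proof.
  intros Ha Hk. eapply Rle_trans; [|apply (sum_f_R0_le_mono a k N Ha Hk)].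
  destruct k as [|k]; simpl; [lra|]. pose proof (cond_pos_sum a k Ha). lra.
Qed.

Lemma Series_ge_term (a : nat -> R) (N : nat) :
  (forall n, 0 <= a n) -> ex_series a -> a N <= Series a.
Proof.
  intros Ha He. eapply Rle_trans; [apply (term_le_sum_f_R0 a N N Ha (le_n N))|].
  apply sum_f_R0_le_Series; assumption.
Qed.

Lemma Series_nonneg (a : nat -> R) : (forall n, 0 <= a n) -> ex_series a -> 0 <= Series a.
Proof. intros Ha He. eapply Rle_trans; [apply (Ha O)| apply Series_ge_term; assumption]. Qed.

Lemma ex_series_nonneg_bounded (a : nat -> R) (B : R) :
  (forall n, 0 <= a n) -> (forall N, sum_f_R0 a N <= B) -> ex_series a.
Proof.
  intros Ha HB. apply ex_series_Reals_1, growing_cv.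
  - intro n. simpl. specialize (Ha (S n)). lra.
  - exists B. intros x [N ->]. apply HB.
Qed.

Lemma Series_le_ub (a : nat -> R) (B : R) :
  ex_series a -> (forall N, sum_f_R0 a N <= B) -> Series a <= B.
Proof.
  intros He HB. apply Rnot_lt_le. intro Hlt.
  destruct (Un_cv_Series a He (Series a - B)) as [N HN]; [lra|].
  specialize (HN N (le_n _)). specialize (HB N). unfold Rdist in HN.
  apply Rabs_def2 in HN. lra.
Qed.

Lemma Series_minus_sum (a : nat -> R) (N : nat) :
  ex_series a -> Series a - sum_f_R0 a N = Series (fun k => a (S N + k)%nat).
Proof. intro H. rewrite (Series_incr_n a (S N)); [simpl; ring| lia| assumption]. Qed.

Lemma sum_f_R0_Series_comm (f : nat -> nat -> R) (N : nat) :
  (forall l, ex_series (f l)) ->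
  ex_series (fun m => sum_f_R0 (fun l => f l m) N) /\
  sum_f_R0 (fun l => Series (f l)) N = Series (fun m => sum_f_R0 (fun l => f l m) N).
Proof.
  intro H. induction N as [|N [IH1 IH2]]; simpl; [split; auto|].
  split; [apply (ex_series_plus (V := R_NormedModule)); auto|].
  rewrite IH2, Series_plus; auto.
Qed.

Lemma is_lim_seq_Series_dominated (T : nat -> nat -> R) (A : nat -> R) :
  (forall N i, 0 <= T N i <= A i) -> ex_series A ->
  (forall i, is_lim_seq (fun N => T N i) 0) ->
  is_lim_seq (fun N => Series (T N)) 0.
Proof.
  intros HT HA Hlim. apply is_lim_seq_Reals. intros eps Heps.
  destruct (Un_cv_Series A HA (eps / 2)) as [I HI]; [lra|].
  specialize (HI I (le_n _)). unfold Rdist in HI. apply Rabs_def2 in HI.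
  assert (Hhead : is_lim_seq (fun N => sum_f_R0 (T N) I) 0).
  { clear HI. induction I as [|I IH]; simpl; [apply Hlim|].
    replace (Finite 0) with (Finite (0 + 0)) by (f_equal; ring).
    apply is_lim_seq_plus'; auto. }
  apply is_lim_seq_Reals in Hhead. destruct (Hhead (eps / 2)) as [N0 HN0]; [lra|].
  exists N0. intros N HN. specialize (HN0 N HN). unfold Rdist in *. rewrite Rminus_0_r in *.
  assert (HTN : ex_series (T N)).
  { apply (ex_series_Rabs_le (T N) A); [|assumption]. intro i. rewrite Rabs_pos_eq; apply HT. }
  assert (Htail : Series (fun k => T N (S I + k)%nat) <= Series (fun k => A (S I + k)%nat)).
  { apply Series_le; [intro; apply HT| apply ex_series_incr_n; assumption]. }
  assert (Htail0 : 0 <= Series (fun k => T N (S I + k)%nat)).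
  { apply Series_nonneg; [intro; apply HT| apply ex_series_incr_n; assumption]. }
  assert (Hhead0 : 0 <= sum_f_R0 (T N) I) by (apply cond_pos_sum; intro; apply HT).
  rewrite <- (Series_minus_sum A I HA), <- (Series_minus_sum (T N) I HTN) in Htail.
  rewrite <- (Series_minus_sum (T N) I HTN) in Htail0.
  rewrite Rabs_pos_eq in HN0 by assumption. rewrite Rabs_pos_eq; lra.
Qed.

Section DoubleSeries.

Variable u : nat -> nat -> R.
Hypothesis Hrow : forall i, ex_series (fun j => Rabs (u i j)).
Hypothesis Hsum : ex_series (fun i => Series (fun j => Rabs (u i j))).

Lemma ex_series_col (j : nat) : ex_series (fun i => Rabs (u i j)).
Proof.
  apply (ex_series_Rabs_le (fun i => Rabs (u i j)) (fun i => Series (fun j => Rabs (u i j)))); [|exact Hsum].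
  intro i. rewrite Rabs_Rabsolu.
  apply (Series_ge_term (fun j => Rabs (u i j))); [intro; apply Rabs_pos| apply Hrow].
Qed.

Lemma ex_series_row (i : nat) : ex_series (u i).
Proof. apply ex_series_Rabs, Hrow. Qed.

Lemma ex_series_Series_row : ex_series (fun i => Series (u i)).
Proof.
  apply (ex_series_Rabs_le _ (fun i => Series (fun j => Rabs (u i j)))); [|exact Hsum].
  intro i. apply Series_Rabs, Hrow.
Qed.

Let tail (N i : nat) : R := Series (fun k => Rabs (u i (S N + k)%nat)).

Lemma ex_series_Rabs_tail (N i : nat) : ex_series (fun k => Rabs (u i (S N + k)%nat)).
Proof. apply (ex_series_incr_n (fun j => Rabs (u i j))), Hrow. Qed.

Lemma tail_bound (N i : nat) : 0 <= tail N i <= Series (fun j => Rabs (u i j)).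
Proof.
  unfold tail. rewrite <- (Series_minus_sum (fun j => Rabs (u i j))) by apply Hrow.
  pose proof (cond_pos_sum (fun j => Rabs (u i j)) N (fun _ => Rabs_pos _)). split; [|lra].
  rewrite Series_minus_sum by apply Hrow.
  apply Series_nonneg; [intro; apply Rabs_pos| apply ex_series_Rabs_tail].
Qed.

Lemma ex_series_tail (N : nat) : ex_series (tail N).
Proof.
  apply (ex_series_Rabs_le (tail N) (fun i => Series (fun j => Rabs (u i j)))); [|exact Hsum].
  intro i. rewrite Rabs_pos_eq; apply tail_bound.
Qed.

Lemma is_lim_seq_Series_tail : is_lim_seq (fun N => Series (tail N)) 0.
Proof.
  apply (is_lim_seq_Series_dominated tail _ tail_bound Hsum).
  intro i. apply is_lim_seq_Reals. intros eps Heps.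
  destruct (Un_cv_Series _ (Hrow i) eps Heps) as [N0 HN0]. exists N0. intros N HN.
  specialize (HN0 N HN). unfold Rdist, tail in *.
  rewrite <- (Series_minus_sum (fun j => Rabs (u i j))) by apply Hrow.
  rewrite Rminus_0_r, Rabs_minus_sym. exact HN0.
Qed.

Lemma is_series_Series_comm :
  is_series (fun j => Series (fun i => u i j)) (Series (fun i => Series (u i))).
Proof.
  pose proof is_lim_seq_Series_tail as Hcvg.
  apply is_lim_seq_Reals in Hcvg. apply is_series_Reals. intros eps Heps.
  destruct (Hcvg eps Heps) as [N0 HN0]. exists N0. intros N HN.
  specialize (HN0 N HN). unfold Rdist in *. rewrite Rminus_0_r in HN0.
  destruct (sum_f_R0_Series_comm (fun j i => u i j) N) as [Hex Hswap].
  { intro j. apply ex_series_Rabs, ex_series_col. }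
  rewrite Hswap, <- Series_minus by (assumption || apply ex_series_Series_row).
  rewrite (Series_ext _ (fun i => - Series (fun k => u i (S N + k)%nat))).
  2:{ intro i. rewrite <- (Series_minus_sum (u i) N) by apply ex_series_row.
    change (fun j => u i j) with (u i). ring. }
  rewrite Series_opp, Rabs_Ropp.
  assert (Hterm : forall i, Rabs (Series (fun k => u i (S N + k)%nat)) <= tail N i).
  { intro i. apply Series_Rabs, ex_series_Rabs_tail. }
  eapply Rle_lt_trans; [apply Series_Rabs|].
  { apply (ex_series_Rabs_le _ (tail N)); [|apply ex_series_tail].
    intro i. rewrite Rabs_Rabsolu. apply Hterm. }
  eapply Rle_lt_trans; [|rewrite Rabs_pos_eq in HN0; [exact HN0|]].
  - apply Series_le; [|apply ex_series_tail]. intro i. split; [apply Rabs_pos| apply Hterm].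
  - apply Series_nonneg; [intro; apply tail_bound| apply ex_series_tail].
Qed.

Lemma Series_comm :
  ex_series (fun j => Series (fun i => u i j)) /\
  Series (fun j => Series (fun i => u i j)) = Series (fun i => Series (u i)).
Proof.
  pose proof is_series_Series_comm as H.
  split; [eexists; exact H| apply is_series_unique, H].
Qed.

End DoubleSeries.

Lemma Series_Rabs_comm (u : nat -> nat -> R) :
  (forall i, ex_series (fun j => Rabs (u i j))) ->
  ex_series (fun i => Series (fun j => Rabs (u i j))) ->
  ex_series (fun j => Series (fun i => Rabs (u i j))) /\
  Series (fun j => Series (fun i => Rabs (u i j))) = Series (fun i => Series (fun j => Rabs (u i j))).
Proof.
  intros Hrow Hsum. apply (Series_comm (fun i j => Rabs (u i j))).
  - intro i. eapply ex_series_ext; [|apply (Hrow i)]. intro; symmetry; apply Rabs_Rabsolu.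
  - eapply ex_series_ext; [|apply Hsum]. intro i. apply Series_ext. intro; symmetry; apply Rabs_Rabsolu.
Qed.

Section TripleSeries.

Variable v : nat -> nat -> nat -> R.
Hypothesis Hk : forall i j, ex_series (fun k => Rabs (v i j k)).
Hypothesis Hjk : forall i, ex_series (fun j => Series (fun k => Rabs (v i j k))).
Hypothesis Hijk : ex_series (fun i => Series (fun j => Series (fun k => Rabs (v i j k)))).

Let U i k := Series (fun j => v i j k).

Lemma Series_Rabs_inner_le (i : nat) :
  ex_series (fun k => Rabs (U i k)) /\
  Series (fun k => Rabs (U i k)) <= Series (fun j => Series (fun k => Rabs (v i j k))).
Proof.
  destruct (Series_Rabs_comm (v i) (Hk i) (Hjk i)) as [Hex Heq].
  assert (HU : forall k, Rabs (U i k) <= Series (fun j => Rabs (v i j k))).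
  { intro k. apply Series_Rabs, (ex_series_col (v i) (Hk i) (Hjk i)). }
  assert (HUex : ex_series (fun k => Rabs (U i k))).
  { eapply ex_series_Rabs_le; [|exact Hex]. intro k. rewrite Rabs_Rabsolu. apply HU. }
  split; [exact HUex|]. rewrite <- Heq.
  apply Series_le; [|exact Hex]. intro k. split; [apply Rabs_pos| apply HU].
Qed.

Lemma Series_comm3 :
  ex_series (fun k => Rabs (Series (fun i => Series (fun j => v i j k)))) /\
  Series (fun k => Series (fun i => Series (fun j => v i j k))) =
  Series (fun i => Series (fun j => Series (fun k => v i j k))).
Proof.
  assert (HUrow : forall i, ex_series (fun k => Rabs (U i k))) by apply Series_Rabs_inner_le.
  assert (HUsum : ex_series (fun i => Series (fun k => Rabs (U i k)))).
  { eapply ex_series_Rabs_le; [|exact Hijk]. intro i.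
    rewrite Rabs_pos_eq by (apply Series_nonneg; [intro; apply Rabs_pos| apply HUrow]).
    apply Series_Rabs_inner_le. }
  split.
  - apply (ex_series_Rabs_le _ (fun k => Series (fun i => Rabs (U i k)))).
    + intro k. rewrite Rabs_Rabsolu. apply Series_Rabs, (ex_series_col U HUrow HUsum).
    + apply (Series_Rabs_comm U HUrow HUsum).
  - transitivity (Series (fun i => Series (U i))); [exact (proj2 (Series_comm U HUrow HUsum))|].
    apply Series_ext. intro i. exact (proj2 (Series_comm (v i) (Hk i) (Hjk i))).
Qed.

End TripleSeries.

Definition interleave {A : Type} (f g : nat -> A) (j : nat) : A :=
  if Nat.even j then f (Nat.div2 j) else g (Nat.div2 j).

Lemma interleave_double {A : Type} (f g : nat -> A) (m : nat) : interleave f g (2 * m) = f m.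
Proof. unfold interleave. rewrite Nat.even_even, Nat.div2_double. reflexivity. Qed.

Lemma interleave_succ_double {A : Type} (f g : nat -> A) (m : nat) :
  interleave f g (S (2 * m)) = g m.
Proof.
  unfold interleave. rewrite Nat.even_succ, <- Nat.negb_even, Nat.even_even, Nat.div2_succ_double.
  reflexivity.
Qed.

Lemma interleave_comp {A B : Type} (F : A -> B) (f g : nat -> A) (j : nat) :
  F (interleave f g j) = interleave (fun m => F (f m)) (fun m => F (g m)) j.
Proof. unfold interleave. destruct (Nat.even j); reflexivity. Qed.

Lemma interleave_even_odd {A : Type} (h : nat -> A) (j : nat) :
  interleave (fun m => h (2 * m)%nat) (fun m => h (S (2 * m))) j = h j.
Proof.
  destruct (Nat.Even_or_Odd j) as [[m ->]|[m ->]].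
  - exact (interleave_double _ _ m).
  - replace (2 * m + 1)%nat with (S (2 * m)) by lia. exact (interleave_succ_double _ _ m).
Qed.

Lemma sum_f_R0_interleave (f g : nat -> R) (n : nat) :
  sum_f_R0 (interleave f g) (S (2 * n)) = sum_f_R0 (fun m => f m + g m) n.
Proof.
  induction n as [|n IH]; [reflexivity|].
  replace (S (2 * S n)) with (S (S (S (2 * n)))) by lia.
  change (sum_f_R0 (interleave f g) (S (S (S (2 * n))))) with
    (sum_f_R0 (interleave f g) (S (2 * n)) + interleave f g (S (S (2 * n)))
     + interleave f g (S (S (S (2 * n))))).
  replace (S (S (2 * n))) with (2 * S n)%nat by lia.
  rewrite IH, interleave_double, interleave_succ_double. simpl. ring.
Qed.

Lemma ex_series_interleave (f g : nat -> R) :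
  (forall m, 0 <= f m) -> (forall m, 0 <= g m) -> ex_series f -> ex_series g ->
  ex_series (interleave f g).
Proof.
  intros Hf Hg Hfs Hgs.
  assert (Hfg : forall j, 0 <= interleave f g j) by (intro j; unfold interleave; destruct (Nat.even j); auto).
  apply (ex_series_nonneg_bounded _ (Series f + Series g) Hfg). intro N.
  apply Rle_trans with (sum_f_R0 (interleave f g) (S (2 * N))).
  - apply sum_f_R0_le_mono; [exact Hfg| lia].
  - rewrite sum_f_R0_interleave, <- Series_plus by assumption.
    apply sum_f_R0_le_Series; [intro m; specialize (Hf m); specialize (Hg m); lra|].
    apply (ex_series_plus (V := R_NormedModule)); assumption.
Qed.

Lemma Series_interleave (f g : nat -> R) :
  ex_series (interleave f g) -> Series (fun m => f m + g m) = Series (interleave f g).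
Proof.
  intro He. apply is_series_unique, is_series_Reals. intros eps Heps.
  destruct (Un_cv_Series _ He eps Heps) as [N0 HN0].
  exists N0. intros n Hn. rewrite <- sum_f_R0_interleave. apply HN0. lia.
Qed.

Lemma exp_Series (x : R) : exp x = Series (fun k => x ^ k / INR (fact k)).
Proof. rewrite exp_Reals. apply Series_ext. intro k. unfold Rdiv. ring. Qed.

Lemma exp_Series_Rabs (x : R) :
  ex_series (fun k => Rabs (x ^ k / INR (fact k))) /\
  Series (fun k => Rabs (x ^ k / INR (fact k))) = exp (Rabs x).
Proof.
  assert (Hterm : forall k, Rabs (x ^ k / INR (fact k)) = Rabs x ^ k / INR (fact k)).
  { intro k. rewrite Rabs_div, RPow_abs, (Rabs_pos_eq (INR _)) by (apply pos_INR || apply INR_fact_neq_0).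
    reflexivity. }
  rewrite (Series_ext _ _ Hterm), <- exp_Series. split; [|reflexivity].
  apply (ex_series_nonneg_bounded _ (exp (Rabs x)) (fun _ => Rabs_pos _)). intro N.
  rewrite (sum_eq _ _ N (fun k _ => Hterm k)). apply exp_ge_taylor, Rabs_pos.
Qed.

Lemma cos_Series (x : R) : cos x = Series (fun k => cos_n k * x ^ (2 * k)).
Proof.
  unfold cos. destruct (exist_cos (Rsqr x)) as [l Hl].
  symmetry. apply is_series_unique, is_series_Reals. intros eps Heps.
  destruct (Hl eps Heps) as [N HN]. exists N. intros n Hn.
  rewrite (sum_eq _ (fun i => cos_n i * x² ^ i)); [apply HN, Hn|].
  intros i _. rewrite pow_mult, Rsqr_pow2. reflexivity.
Qed.

Lemma cos_Series_Rabs (x : R) :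
  ex_series (fun k => Rabs (cos_n k * x ^ (2 * k))) /\
  Series (fun k => Rabs (cos_n k * x ^ (2 * k))) <= exp (Rabs x).
Proof.
  set (e := fun j => Rabs x ^ j / INR (fact j)).
  assert (He0 : forall j, 0 <= e j).
  { intro j. apply Rdiv_le_0_compat; [apply pow_le, Rabs_pos| apply INR_fact_lt_0]. }
  assert (Hterm : forall k, Rabs (cos_n k * x ^ (2 * k)) = e (2 * k)%nat).
  { intro k. unfold cos_n, e. rewrite Rabs_mult, Rabs_div, pow_1_abs, RPow_abs, (Rabs_pos_eq (INR _))
      by (apply pos_INR || apply INR_fact_neq_0). unfold Rdiv. ring. }
  assert (Hpartial : forall N, sum_f_R0 (fun k => Rabs (cos_n k * x ^ (2 * k))) N <= exp (Rabs x)).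
  { intro N. rewrite (sum_eq _ _ N (fun k _ => Hterm k)).
    apply Rle_trans with (sum_f_R0 (fun k => e (2 * k)%nat + e (S (2 * k))) N).
    { apply sum_Rle. intros k _. specialize (He0 (S (2 * k))). lra. }
    rewrite <- sum_f_R0_interleave, (sum_eq _ e) by (intros; apply interleave_even_odd).
    apply exp_ge_taylor, Rabs_pos. }
  assert (Hex : ex_series (fun k => Rabs (cos_n k * x ^ (2 * k)))).
  { apply (ex_series_nonneg_bounded _ _ (fun _ => Rabs_pos _) Hpartial). }
  split; [exact Hex| apply Series_le_ub; assumption].
Qed.

Definition exp_dominated (d w : nat -> nat -> R) : Prop :=
  forall r, 0 <= r ->
  (forall i, ex_series (fun j => Rabs (d i j) * exp (r * Rabs (w i j)))) /\
  ex_series (fun i => Series (fun j => Rabs (d i j) * exp (r * Rabs (w i j)))).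

Definition moment (d w : nat -> nat -> R) (n : nat) : R :=
  Series (fun i => Series (fun j => d i j * w i j ^ n)).

Definition exp_sum (d w : nat -> nat -> R) (y : R) : R :=
  Series (fun i => Series (fun j => d i j * exp (w i j * y))).

Definition cos_sum (d w : nat -> nat -> R) (theta : R) : R :=
  Series (fun i => Series (fun j => d i j * cos (w i j * theta))).

Section MomentExpansion.

Variables (d w : nat -> nat -> R) (c : nat -> R) (p : nat -> nat) (r : R).
Hypothesis Hr : 0 <= r.
Hypothesis Hdom : exp_dominated d w.
Hypothesis Hc : forall x,
  ex_series (fun k => Rabs (c k * x ^ p k)) /\
  Series (fun k => Rabs (c k * x ^ p k)) <= exp (r * Rabs x).

Lemma Series2_moment_expansion :
  ex_series (fun k => Rabs (c k * moment d w (p k))) /\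
  Series (fun i => Series (fun j => d i j * Series (fun k => c k * w i j ^ p k))) =
  Series (fun k => c k * moment d w (p k)).
Proof.
  destruct (Hdom r Hr) as [Hrow Hsum].
  set (v := fun i j k => d i j * (c k * w i j ^ p k)).
  assert (Hv : forall i j, ex_series (fun k => Rabs (v i j k)) /\
                 Series (fun k => Rabs (v i j k)) <= Rabs (d i j) * exp (r * Rabs (w i j))).
  { intros i j. destruct (Hc (w i j)) as [Hex Hle]. unfold v.
    assert (Habs : forall k, Rabs (d i j) * Rabs (c k * w i j ^ p k) = Rabs (d i j * (c k * w i j ^ p k)))
      by (intro; symmetry; apply Rabs_mult).
    rewrite <- (Series_ext _ _ Habs), Series_scal_l.
    split; [eapply ex_series_ext; [exact Habs| exact (ex_series_scal_l _ _ Hex)]|].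
    apply Rmult_le_compat_l; [apply Rabs_pos| exact Hle]. }
  assert (Hv0 : forall i j, 0 <= Series (fun k => Rabs (v i j k)))
    by (intros; apply Series_nonneg; [intro; apply Rabs_pos| apply Hv]).
  assert (Hrow' : forall i, ex_series (fun j => Series (fun k => Rabs (v i j k)))).
  { intro i. eapply ex_series_Rabs_le; [|apply (Hrow i)].
    intro j. rewrite Rabs_pos_eq by apply Hv0. apply Hv. }
  assert (Hsum' : ex_series (fun i => Series (fun j => Series (fun k => Rabs (v i j k))))).
  { eapply ex_series_Rabs_le; [|apply Hsum]. intro i.
    rewrite Rabs_pos_eq by (apply Series_nonneg; [apply Hv0| apply Hrow']).
    apply Series_le; [|apply Hrow]. intro j. split; [apply Hv0| apply Hv]. }
  assert (Hmoment : forall k, Series (fun i => Series (fun j => v i j k)) = c k * moment d w (p k)).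
  { intro k. unfold moment, v. rewrite <- Series_scal_l. apply Series_ext. intro i.
    rewrite <- Series_scal_l. apply Series_ext. intro j. ring. }
  destruct (Series_comm3 v (fun i j => proj1 (Hv i j)) Hrow' Hsum') as [Hex Heq].
  assert (Hmoments : Series (fun k => Series (fun i => Series (fun j => v i j k))) =
                     Series (fun k => c k * moment d w (p k))) by (apply Series_ext; exact Hmoment).
  rewrite Hmoments in Heq. split.
  - eapply ex_series_ext; [|exact Hex]. intro k. exact (f_equal Rabs (Hmoment k)).
  - rewrite Heq. apply Series_ext. intro i. apply Series_ext. intro j.
    unfold v. rewrite Series_scal_l. reflexivity.
Qed.

End MomentExpansion.

Lemma exp_sum_moments (d w : nat -> nat -> R) (y : R) : exp_dominated d w ->
  ex_series (fun k => Rabs (moment d w k / INR (fact k) * y ^ k)) /\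
  exp_sum d w y = Series (fun k => moment d w k / INR (fact k) * y ^ k).
Proof.
  intro Hdom.
  assert (Hc : forall x, ex_series (fun k => Rabs (y ^ k / INR (fact k) * x ^ k)) /\
              Series (fun k => Rabs (y ^ k / INR (fact k) * x ^ k)) <= exp (Rabs y * Rabs x)).
  { intro x. assert (Hterm : forall k, (x * y) ^ k / INR (fact k) = y ^ k / INR (fact k) * x ^ k)
      by (intro; rewrite Rpow_mult_distr; unfold Rdiv; ring).
    destruct (exp_Series_Rabs (x * y)) as [Hex Heq].
    rewrite <- Rabs_mult, (Rmult_comm y x), <- Heq.
    split; [eapply ex_series_ext; [|exact Hex]| right; apply Series_ext];
      intro k; cbv beta; rewrite Hterm; reflexivity. }
  destruct (Series2_moment_expansion d w _ (fun k => k) _ (Rabs_pos y) Hdom Hc) as [Hex Heq].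
  assert (Hterm : forall k, y ^ k / INR (fact k) * moment d w k = moment d w k / INR (fact k) * y ^ k)
    by (intro; unfold Rdiv; ring).
  split; [eapply ex_series_ext; [|exact Hex]; intro k; cbv beta; rewrite Hterm; reflexivity|].
  rewrite <- (Series_ext _ _ Hterm), <- Heq. unfold exp_sum.
  apply Series_ext. intro i. apply Series_ext. intro j. rewrite exp_Series. f_equal.
  apply Series_ext. intro k. rewrite Rpow_mult_distr. unfold Rdiv. ring.
Qed.

Lemma cos_sum_moments (d w : nat -> nat -> R) (theta : R) : exp_dominated d w ->
  cos_sum d w theta = Series (fun k => cos_n k * theta ^ (2 * k) * moment d w (2 * k)).
Proof.
  intro Hdom.
  assert (Hc : forall x, ex_series (fun k => Rabs (cos_n k * theta ^ (2 * k) * x ^ (2 * k))) /\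
      Series (fun k => Rabs (cos_n k * theta ^ (2 * k) * x ^ (2 * k))) <= exp (Rabs theta * Rabs x)).
  { intro x. assert (Hterm : forall k, cos_n k * (x * theta) ^ (2 * k) = cos_n k * theta ^ (2 * k) * x ^ (2 * k))
      by (intro; rewrite Rpow_mult_distr; ring).
    destruct (cos_Series_Rabs (x * theta)) as [Hex Hle].
    rewrite <- Rabs_mult, (Rmult_comm theta x), <- (Series_ext _ _ (fun k => f_equal Rabs (Hterm k))).
    split; [eapply ex_series_ext; [|exact Hex]; intro k; cbv beta; rewrite Hterm; reflexivity| exact Hle]. }
  destruct (Series2_moment_expansion d w _ (fun k => 2 * k)%nat _ (Rabs_pos theta) Hdom Hc) as [_ Heq].
  rewrite <- Heq. unfold cos_sum.
  apply Series_ext. intro i. apply Series_ext. intro j. rewrite cos_Series. f_equal.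
  apply Series_ext. intro k. rewrite Rpow_mult_distr. ring.
Qed.

Lemma CV_radius_pos_of_ex_series (a : nat -> R) :
  ex_series (fun k => Rabs (a k * 1 ^ k)) -> Rbar_lt 0 (CV_radius a).
Proof.
  intro Ha. apply Rbar_lt_le_trans with 1; [simpl; lra|].
  apply (proj1 (CV_radius_bounded a)). exists (Series (fun k => Rabs (a k * 1 ^ k))).
  intro k. apply (Series_ge_term (fun k => Rabs (a k * 1 ^ k))); [intro; apply Rabs_pos| exact Ha].
Qed.

Lemma moment_eq_of_exp_sum_eq (d1 w1 d2 w2 : nat -> nat -> R) :
  exp_dominated d1 w1 -> exp_dominated d2 w2 ->
  (forall y, exp_sum d1 w1 y = exp_sum d2 w2 y) ->
  forall n, moment d1 w1 n = moment d2 w2 n.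
Proof.
  intros H1 H2 Heq n.
  set (a1 := fun k => moment d1 w1 k / INR (fact k)).
  set (a2 := fun k => moment d2 w2 k / INR (fact k)).
  assert (Ha : a1 n = a2 n).
  { apply PSeries_ext_recip.
    - apply CV_radius_pos_of_ex_series, (exp_sum_moments d1 w1 1 H1).
    - apply CV_radius_pos_of_ex_series, (exp_sum_moments d2 w2 1 H2).
    - exists (mkposreal 1 Rlt_0_1). intros y _. unfold PSeries, a1, a2.
      rewrite <- (proj2 (exp_sum_moments d1 w1 y H1)), <- (proj2 (exp_sum_moments d2 w2 y H2)).
      apply Heq. }
  unfold a1, a2 in Ha. apply Rmult_eq_reg_r with (/ INR (fact n)); [exact Ha|].
  apply Rinv_neq_0_compat, INR_fact_neq_0.
Qed.

(* [exp_sum d w] is the exponential generating function of the moments and [cos_sum d w θ]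
   the real part of its value at [iθ]. *)
Theorem cos_sum_eq_of_exp_sum_eq (d1 w1 d2 w2 : nat -> nat -> R) :
  exp_dominated d1 w1 -> exp_dominated d2 w2 ->
  (forall y, exp_sum d1 w1 y = exp_sum d2 w2 y) ->
  forall theta, cos_sum d1 w1 theta = cos_sum d2 w2 theta.
Proof.
  intros H1 H2 Heq theta. rewrite (cos_sum_moments _ _ _ H1), (cos_sum_moments _ _ _ H2).
  apply Series_ext. intro k. rewrite (moment_eq_of_exp_sum_eq _ _ _ _ H1 H2 Heq). reflexivity.
Qed.

Definition CSeries (f : nat -> CC) : CC := (Series (fun m => Re (f m)), Series (fun m => Im (f m))).

Lemma CSeries_ext (f g : nat -> CC) : (forall m, f m = g m) -> CSeries f = CSeries g.
Proof. intro H. unfold CSeries. f_equal; apply Series_ext; intro m; rewrite H; reflexivity. Qed.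

Lemma Im_le_Cmod (c : CC) : Rabs (Im c) <= Cmod c.
Proof. eapply Rle_trans; [apply Rmax_r| apply Rmax_Cmod]. Qed.

Lemma ex_series_Rabs_Re (f : nat -> CC) :
  ex_series (fun m => Cmod (f m)) -> ex_series (fun m => Rabs (Re (f m))).
Proof. apply ex_series_Rabs_le. intro m. rewrite Rabs_Rabsolu. apply re_le_Cmod. Qed.

Lemma ex_series_Rabs_Im (f : nat -> CC) :
  ex_series (fun m => Cmod (f m)) -> ex_series (fun m => Rabs (Im (f m))).
Proof. apply ex_series_Rabs_le. intro m. rewrite Rabs_Rabsolu. apply Im_le_Cmod. Qed.

Lemma ex_series_Re (f : nat -> CC) : ex_series (fun m => Cmod (f m)) -> ex_series (fun m => Re (f m)).
Proof. intro H. apply ex_series_Rabs, ex_series_Rabs_Re, H. Qed.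

Lemma ex_series_Im (f : nat -> CC) : ex_series (fun m => Cmod (f m)) -> ex_series (fun m => Im (f m)).
Proof. intro H. apply ex_series_Rabs, ex_series_Rabs_Im, H. Qed.

Lemma CSeries_mult_r (f : nat -> CC) (c : CC) : ex_series (fun m => Cmod (f m)) ->
  Cmult (CSeries f) c = CSeries (fun m => Cmult (f m) c).
Proof.
  intro H. pose proof (ex_series_Re f H) as HRe. pose proof (ex_series_Im f H) as HIm.
  destruct c as [c1 c2]. unfold CSeries, Cmult, Re, Im in *. simpl.
  rewrite Series_minus, Series_plus, !Series_scal_r; try (apply ex_series_scal_r; assumption).
  reflexivity.
Qed.

Lemma Cmod_CSeries_sqr (h : nat -> CC) : ex_series (fun j => Cmod (h j)) ->
  Cmod (CSeries h) ^ 2 = Series (fun i => Series (fun j => Re (Cmult (h i) (Cconj (h j))))).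
Proof.
  intro H. pose proof (ex_series_Re h H) as HRe. pose proof (ex_series_Im h H) as HIm.
  set (SRe := Series (fun j => Re (h j))). set (SIm := Series (fun j => Im (h j))).
  assert (Hrow : forall i, Series (fun j => Re (Cmult (h i) (Cconj (h j)))) = Re (h i) * SRe + Im (h i) * SIm).
  { intro i. transitivity (Series (fun j => Re (h i) * Re (h j) + Im (h i) * Im (h j))).
    - apply Series_ext. intro j. destruct (h i) as [p q], (h j) as [p' q'].
      unfold Re, Im, Cmult, Cconj. simpl. ring.
    - rewrite Series_plus, !Series_scal_l;
        [reflexivity| exact (ex_series_scal_l (Re (h i)) _ HRe)| exact (ex_series_scal_l (Im (h i)) _ HIm)]. }
  rewrite (Series_ext _ _ Hrow), Series_plus, !Series_scal_r by (apply ex_series_scal_r; assumption).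
  rewrite Cmod2_alt. change (SRe ^ 2 + SIm ^ 2 = SRe * SRe + SIm * SIm). ring.
Qed.

Lemma CSeries_interleave (f g : nat -> CC) :
  ex_series (fun j => Cmod (interleave f g j)) ->
  CSeries (interleave f g) = CSeries (fun m => Cplus (f m) (g m)).
Proof.
  intro H. unfold CSeries. f_equal.
  - rewrite (Series_ext _ _ (fun j => interleave_comp Re f g j)), <- Series_interleave;
      [reflexivity|].
    eapply ex_series_ext; [|apply ex_series_Re, H]. intro j. apply interleave_comp.
  - rewrite (Series_ext _ _ (fun j => interleave_comp Im f g j)), <- Series_interleave;
      [reflexivity|].
    eapply ex_series_ext; [|apply ex_series_Im, H]. intro j. apply interleave_comp.
Qed.

Lemma exp_le (x y : R) : x <= y -> exp x <= exp y.
Proof. intros [H|H]; [left; apply exp_increasing, H| right; rewrite H; reflexivity]. Qed.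

Lemma exp_mult_INR (n : nat) (x : R) : exp (INR n * x) = exp x ^ n.
Proof.
  induction n as [|n IH]; [rewrite Rmult_0_l; apply exp_0|].
  rewrite S_INR, Rmult_plus_distr_r, exp_plus, IH, Rmult_1_l. simpl. ring.
Qed.

Definition exp2pi (n : R) (z : CC) : CC := cexp (Cmult (RtoC (2 * PI * n)) (Cmult Ci z)).

Lemma exp2pi_xy (n x y : R) : exp2pi n (x, y) =
  (exp (- (2 * PI * n) * y) * cos (2 * PI * n * x), exp (- (2 * PI * n) * y) * sin (2 * PI * n * x)).
Proof.
  unfold exp2pi, cexp, Cmult, Ci, RtoC, Re, Im. simpl.
  replace (2 * PI * n * (0 * x - 1 * y) - 0 * (0 * y + 1 * x)) with (- (2 * PI * n) * y) by ring.
  replace (2 * PI * n * (0 * y + 1 * x) + 0 * (0 * x - 1 * y)) with (2 * PI * n * x) by ring.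
  reflexivity.
Qed.

Lemma Cmod_cexp (u : CC) : Cmod (cexp u) = exp (Re u).
Proof.
  unfold Cmod, cexp, Re, Im. simpl fst. simpl snd.
  pose proof (sin2_cos2 (snd u)) as H. unfold Rsqr in H.
  replace ((exp (fst u) * cos (snd u)) ^ 2 + (exp (fst u) * sin (snd u)) ^ 2)
    with (exp (fst u) ^ 2 * (sin (snd u) * sin (snd u) + cos (snd u) * cos (snd u))) by ring.
  rewrite H, Rmult_1_r. apply sqrt_pow2. left. apply exp_pos.
Qed.

Lemma Cmod_exp2pi (n : R) (z : CC) : Cmod (exp2pi n z) = exp (- (2 * PI * n) * Im z).
Proof.
  unfold exp2pi. rewrite Cmod_cexp. f_equal.
  destruct z as [x y]. unfold Cmult, Ci, RtoC, Re, Im. simpl. ring.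
Qed.

Lemma exp2pi_plus (n m : R) (z : CC) : Cmult (exp2pi n z) (exp2pi m z) = exp2pi (n + m) z.
Proof.
  destruct z as [x y]. rewrite !exp2pi_xy.
  replace (- (2 * PI * (n + m)) * y) with (- (2 * PI * n) * y + - (2 * PI * m) * y) by ring.
  replace (2 * PI * (n + m) * x) with (2 * PI * n * x + 2 * PI * m * x) by ring.
  rewrite exp_plus, cos_plus, sin_plus. unfold Cmult. simpl. f_equal; ring.
Qed.

Lemma exp2pi_shift_Im (n x y0 y : R) :
  Cmult (exp2pi n (x, y0)) (RtoC (exp (- (2 * PI * n) * y))) = exp2pi n (x, y0 + y).
Proof.
  rewrite !exp2pi_xy. unfold Cmult, RtoC. simpl.
  rewrite Rmult_plus_distr_l, exp_plus. f_equal; ring.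
Qed.

Lemma exp2pi_shift_Re (n x y s : R) : sin (2 * PI * n * s) = 0 ->
  Cmult (exp2pi n (x, y)) (RtoC (cos (2 * PI * n * s))) = exp2pi n (x + s, y).
Proof.
  intro Hs. rewrite !exp2pi_xy. unfold Cmult, RtoC. simpl.
  rewrite Rmult_plus_distr_l, cos_plus, sin_plus, Hs. f_equal; ring.
Qed.

Lemma sigma_exp2pi (z : CC) : Defs.sigma z = Cminus (exp2pi 1 z) (exp2pi (-1) z).
Proof. unfold Defs.sigma, exp2pi. do 4 f_equal; ring. Qed.

Lemma sum_exp2pi_mult_sigma (p : R) (m : nat) (z : CC) :
  Cmult (sum_n (fun k => exp2pi (p - 2 * INR k) z) m) (Defs.sigma z) =
  Cminus (exp2pi (p + 1) z) (exp2pi (p - 2 * INR m - 1) z).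
Proof.
  rewrite sigma_exp2pi. induction m as [|m IH].
  - rewrite sum_O. simpl INR.
    transitivity (Cminus (Cmult (exp2pi (p - 2 * 0) z) (exp2pi 1 z))
                         (Cmult (exp2pi (p - 2 * 0) z) (exp2pi (-1) z))); [ring|].
    rewrite !exp2pi_plus. f_equal; f_equal; ring.
  - rewrite sum_Sn. change plus with Cplus.
    transitivity (Cplus (Cmult (sum_n (fun k => exp2pi (p - 2 * INR k) z) m) (Cminus (exp2pi 1 z) (exp2pi (-1) z)))
      (Cminus (Cmult (exp2pi (p - 2 * INR (S m)) z) (exp2pi 1 z))
              (Cmult (exp2pi (p - 2 * INR (S m)) z) (exp2pi (-1) z)))); [ring|].
    rewrite IH, !exp2pi_plus, S_INR.
    replace (p - 2 * (INR m + 1) + 1) with (p - 2 * INR m - 1) by ring.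
    replace (p - 2 * (INR m + 1) + -1) with (p - 2 * (INR m + 1) - 1) by ring. ring.
Qed.

Lemma chi_d_mult_sigma (m : nat) (z : CC) :
  Cmult (chi_d m z) (Defs.sigma z) = Cminus (exp2pi (INR m + 1) z) (exp2pi (- (INR m + 1)) z).
Proof.
  change (chi_d m z) with (sum_n (fun k => exp2pi (INR m - 2 * INR k) z) m).
  rewrite sum_exp2pi_mult_sigma. f_equal; f_equal; ring.
Qed.

Lemma Cmod_sum_n_le (f : nat -> CC) (m : nat) :
  Cmod (sum_n f m) <= sum_f_R0 (fun k => Cmod (f k)) m.
Proof.
  induction m as [|m IH]; [rewrite sum_O; simpl; lra|].
  rewrite sum_Sn. simpl sum_f_R0. eapply Rle_trans; [apply Cmod_triangle|]. lra.
Qed.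

Lemma Cmod_chi_d_le (m : nat) (z : CC) :
  Cmod (chi_d m z) <= exp ((2 * PI * Rabs (Im z) + 1) * (INR m + 1)).
Proof.
  pose proof PI_RGT_0. pose proof (Rabs_pos (Im z)). pose proof (pos_INR m).
  change (chi_d m z) with (sum_n (fun k => exp2pi (INR m - 2 * INR k) z) m).
  eapply Rle_trans; [apply Cmod_sum_n_le|].
  apply Rle_trans with (sum_f_R0 (fun _ => exp (2 * PI * Rabs (Im z) * (INR m + 1))) m).
  - apply sum_Rle. intros k Hk. rewrite Cmod_exp2pi.
    apply le_INR in Hk. pose proof (pos_INR k).
    assert (Hlin : - (INR m - 2 * INR k) * Im z <= (INR m + 1) * Rabs (Im z)).
    { apply Rle_trans with (Rabs (INR m - 2 * INR k) * Rabs (Im z)).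
      - rewrite <- Rabs_mult, <- Rabs_Ropp. replace (- (INR m - 2 * INR k) * Im z) with
          (- ((INR m - 2 * INR k) * Im z)) by ring. apply Rle_abs.
      - apply Rmult_le_compat_r; [lra|]. apply Rabs_le. lra. }
    apply exp_le. nra.
  - rewrite sum_cte, S_INR.
    replace ((2 * PI * Rabs (Im z) + 1) * (INR m + 1))
      with (2 * PI * Rabs (Im z) * (INR m + 1) + (INR m + 1)) by ring.
    rewrite exp_plus. apply Rmult_le_compat_l; [left; apply exp_pos|].
    pose proof (exp_ineq1_le (INR m + 1)). lra.
Qed.

Definition exp_summable (g : nat -> CC) (om : nat -> R) : Prop :=
  forall r, 0 <= r -> ex_series (fun j => Cmod (g j) * exp (r * Rabs (om j))).

Lemma ex_series_Cmod_of_exp_summable (g : nat -> CC) (om : nat -> R) :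
  exp_summable g om -> ex_series (fun j => Cmod (g j)).
Proof.
  intro H. eapply ex_series_ext; [|apply (H 0 (Rle_refl 0))].
  intro j. cbv beta. rewrite Rmult_0_l, exp_0. apply Rmult_1_r.
Qed.

Definition gram_weight (c : R) (g : nat -> CC) (i j : nat) : R := c * Re (Cmult (g i) (Cconj (g j))).

Definition gram_exponent (s : R) (om : nat -> R) (i j : nat) : R := om i + om j + s.

Section Gram.

Variables (c s : R) (g : nat -> CC) (om : nat -> R).
Hypothesis Hg : exp_summable g om.

Lemma exp_dominated_gram : exp_dominated (gram_weight c g) (gram_exponent s om).
Proof.
  intros r Hr. specialize (Hg r Hr) as HG.
  set (G := fun j => Cmod (g j) * exp (r * Rabs (om j))).
  set (K := Rabs c * exp (r * Rabs s)).
  assert (HG0 : forall j, 0 <= G j)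
    by (intro; apply Rmult_le_pos; [apply Cmod_ge_0| left; apply exp_pos]).
  assert (Hterm0 : forall i j, 0 <= Rabs (gram_weight c g i j) * exp (r * Rabs (gram_exponent s om i j)))
    by (intros; apply Rmult_le_pos; [apply Rabs_pos| left; apply exp_pos]).
  assert (Hterm : forall i j,
    Rabs (gram_weight c g i j) * exp (r * Rabs (gram_exponent s om i j)) <= K * G i * G j).
  { intros i j. unfold gram_weight, gram_exponent, K, G. rewrite Rabs_mult.
    assert (Hw : Rabs (Re (Cmult (g i) (Cconj (g j)))) <= Cmod (g i) * Cmod (g j)).
    { rewrite <- Cmod_conj with (c := g j), <- Cmod_mult. apply re_le_Cmod. }
    assert (He : exp (r * Rabs (om i + om j + s)) <=
                 exp (r * Rabs s) * exp (r * Rabs (om i)) * exp (r * Rabs (om j))).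
    { rewrite <- !exp_plus. apply exp_le.
      pose proof (Rabs_triang (om i + om j) s). pose proof (Rabs_triang (om i) (om j)). nra. }
    apply Rle_trans with (Rabs c * (Cmod (g i) * Cmod (g j)) *
                          (exp (r * Rabs s) * exp (r * Rabs (om i)) * exp (r * Rabs (om j)))).
    - apply Rmult_le_compat; [apply Rmult_le_pos; apply Rabs_pos| left; apply exp_pos| |exact He].
      apply Rmult_le_compat_l; [apply Rabs_pos| exact Hw].
    - right. ring. }
  assert (Hrow : forall i, ex_series (fun j =>
    Rabs (gram_weight c g i j) * exp (r * Rabs (gram_exponent s om i j)))).
  { intro i. apply (ex_series_Rabs_le _ (fun j => K * G i * G j)).
    - intro j. rewrite Rabs_pos_eq by apply Hterm0. apply Hterm.
    - exact (ex_series_scal_l (K * G i) _ HG). }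
  split; [exact Hrow|].
  apply (ex_series_Rabs_le _ (fun i => K * G i * Series G)).
  - intro i. rewrite Rabs_pos_eq by (apply Series_nonneg; [apply Hterm0| apply Hrow]).
    rewrite <- Series_scal_l. apply Series_le; [|exact (ex_series_scal_l (K * G i) _ HG)].
    intro j. split; [apply Hterm0| apply Hterm].
  - apply ex_series_scal_r. exact (ex_series_scal_l K _ HG).
Qed.

Lemma exp_sum_gram (y : R) :
  exp_sum (gram_weight c g) (gram_exponent s om) y =
  c * exp (s * y) * Cmod (CSeries (fun j => Cmult (g j) (RtoC (exp (om j * y))))) ^ 2.
Proof.
  rewrite Cmod_CSeries_sqr.
  - unfold exp_sum. rewrite <- Series_scal_l. apply Series_ext. intro i.
    rewrite <- Series_scal_l. apply Series_ext. intro j. unfold gram_weight, gram_exponent.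
    rewrite !Rmult_plus_distr_r, !exp_plus.
    destruct (g i) as [p q], (g j) as [p' q']. unfold Re, Cmult, Cconj, RtoC. simpl. ring.
  - apply (ex_series_Rabs_le _ (fun j => Cmod (g j) * exp (Rabs y * Rabs (om j)))); [|apply Hg, Rabs_pos].
    intro j. rewrite Rabs_pos_eq, Cmod_mult, Cmod_R, Rabs_pos_eq by (apply Cmod_ge_0 || (left; apply exp_pos)).
    apply Rmult_le_compat_l; [apply Cmod_ge_0|]. apply exp_le.
    rewrite Rmult_comm, <- Rabs_mult. apply Rle_abs.
Qed.

Lemma cos_sum_gram (theta : R) : (forall j, sin (om j * theta) = 0) ->
  cos_sum (gram_weight c g) (gram_exponent s om) theta =
  c * cos (s * theta) * Cmod (CSeries (fun j => Cmult (g j) (RtoC (cos (om j * theta))))) ^ 2.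
Proof.
  intro Hsin. rewrite Cmod_CSeries_sqr.
  - unfold cos_sum. rewrite <- Series_scal_l. apply Series_ext. intro i.
    rewrite <- Series_scal_l. apply Series_ext. intro j. unfold gram_weight, gram_exponent.
    rewrite !Rmult_plus_distr_r, !cos_plus, !sin_plus, (Hsin i), (Hsin j).
    destruct (g i) as [p q], (g j) as [p' q']. unfold Re, Cmult, Cconj, RtoC. simpl. ring.
  - apply (ex_series_Rabs_le _ (fun j => Cmod (g j))); [|apply (ex_series_Cmod_of_exp_summable g om Hg)].
    intro j. rewrite Rabs_pos_eq, Cmod_mult, Cmod_R by apply Cmod_ge_0.
    pose proof (Cmod_ge_0 (g j)). pose proof (COS_bound (om j * theta)).
    assert (Rabs (cos (om j * theta)) <= 1) by (apply Rabs_le; lra). nra.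
Qed.

End Gram.

Lemma sum_f_R0_cos_eq0 (al : R) (n k : nat) :
  sin (al / 2) <> 0 -> al * INR (S n) = 2 * INR k * PI ->
  sum_f_R0 (fun l => cos (al * INR l)) n = 0.
Proof.
  intros Hs Hper. set (g := fun l : nat => sin (al * (INR l - 1 / 2))).
  assert (Hstep : forall l, g (S l) - g l = 2 * sin (al / 2) * cos (al * INR l)).
  { intro l. unfold g. rewrite S_INR.
    replace (al * (INR l + 1 - 1 / 2)) with (al * INR l + al / 2) by field.
    replace (al * (INR l - 1 / 2)) with (al * INR l - al / 2) by field.
    rewrite sin_plus, sin_minus. ring. }
  assert (Htel : forall N, 2 * sin (al / 2) * sum_f_R0 (fun l => cos (al * INR l)) N = g (S N) - g O).
  { induction N as [|N IH]; cbn [sum_f_R0]; [rewrite <- Hstep; ring|].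
    rewrite Rmult_plus_distr_l, IH, <- Hstep. ring. }
  assert (Hend : g (S n) = g O).
  { unfold g. rewrite Rmult_minus_distr_l, Hper. change (INR 0) with 0.
    replace (2 * INR k * PI - al * (1 / 2)) with (al * (0 - 1 / 2) + 2 * INR k * PI) by ring.
    apply sin_period. }
  apply (Rmult_eq_reg_l (2 * sin (al / 2))); [|lra]. rewrite Htel, Hend. ring.
Qed.

Lemma sum_f_R0_cos_int_eq0 (n d : nat) (x : R) : (0 < d <= n)%nat -> Rabs x = INR d ->
  sum_f_R0 (fun l => cos (x * (2 * PI / INR (S n)) * INR l)) n = 0.
Proof.
  intros Hd Hx. pose proof PI_RGT_0.
  assert (HM : 0 < INR (S n)) by apply lt_0_INR, Nat.lt_0_succ.
  assert (Hd0 : 0 < INR d) by (apply lt_0_INR; lia).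
  assert (HdM : INR d < INR (S n)) by (apply lt_INR; lia).
  assert (Hsin : 0 < sin (INR d * (2 * PI / INR (S n)) / 2)).
  { apply sin_gt_0.
    - apply Rdiv_lt_0_compat; [apply Rmult_lt_0_compat; [lra| apply Rdiv_lt_0_compat; lra]| lra].
    - replace (INR d * (2 * PI / INR (S n)) / 2) with (PI * (INR d / INR (S n))) by (field; lra).
      rewrite <- (Rmult_1_r PI) at 2. apply Rmult_lt_compat_l; [lra|].
      apply (Rmult_lt_reg_r (INR (S n))); [lra|]. field_simplify; lra. }
  assert (Hpos : sum_f_R0 (fun l => cos (INR d * (2 * PI / INR (S n)) * INR l)) n = 0).
  { apply (sum_f_R0_cos_eq0 _ _ d); [lra|]. field. lra. }
  destruct (Rcase_abs x) as [Hneg|Hnneg].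
  - rewrite Rabs_left in Hx by exact Hneg. rewrite <- Hpos. apply sum_eq. intros l _.
    replace (INR d) with (- x) by lra. rewrite <- cos_neg. f_equal. ring.
  - rewrite Rabs_pos_eq in Hx by lra. rewrite Hx. exact Hpos.
Qed.

(* Discrete orthogonality of sines at [S n] equally spaced points of a period, used in place of
   integration over the period. *)
Definition sin_sample_dot (n K m : nat) : R :=
  sum_f_R0 (fun l => sin (2 * PI * (INR K + 1) * (INR l / INR (S n))) *
                     sin (2 * PI * (INR m + 1) * (INR l / INR (S n)))) n.

Lemma sin_sample_dot_cos (n K m : nat) : sin_sample_dot n K m = / 2 *
  (sum_f_R0 (fun l => cos ((INR K - INR m) * (2 * PI / INR (S n)) * INR l)) n -
   sum_f_R0 (fun l => cos ((INR K + INR m + 2) * (2 * PI / INR (S n)) * INR l)) n).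
Proof.
  assert (HM : 0 < INR (S n)) by apply lt_0_INR, Nat.lt_0_succ.
  unfold sin_sample_dot. rewrite <- minus_sum, scal_sum. apply sum_eq. intros l _.
  set (A := 2 * PI * (INR K + 1) * (INR l / INR (S n))).
  set (B := 2 * PI * (INR m + 1) * (INR l / INR (S n))).
  replace ((INR K - INR m) * (2 * PI / INR (S n)) * INR l) with (A - B) by (unfold A, B; field; lra).
  replace ((INR K + INR m + 2) * (2 * PI / INR (S n)) * INR l) with (A + B) by (unfold A, B; field; lra).
  rewrite cos_minus, cos_plus. field.
Qed.

Lemma sin_sample_dot_off_diag (n K m : nat) : m <> K -> (K + m + 2 <= n)%nat -> sin_sample_dot n K m = 0.
Proof.
  intros Hne Hn. rewrite sin_sample_dot_cos.
  rewrite (sum_f_R0_cos_int_eq0 n (K + m + 2) (INR K + INR m + 2)) by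
    (lia || (rewrite !plus_INR; simpl; apply Rabs_pos_eq; pose proof (pos_INR K); pose proof (pos_INR m); lra)).
  destruct (Compare_dec.lt_dec m K) as [Hlt|Hge].
  - rewrite (sum_f_R0_cos_int_eq0 n (K - m) (INR K - INR m)); [ring| lia|].
    rewrite minus_INR by lia. apply Rabs_pos_eq. apply lt_INR in Hlt. lra.
  - rewrite (sum_f_R0_cos_int_eq0 n (m - K) (INR K - INR m)); [ring| lia|].
    rewrite minus_INR by lia. rewrite Rabs_minus_sym. apply Rabs_pos_eq.
    assert (K < m)%nat by lia. apply lt_INR in H. lra.
Qed.

Lemma sin_sample_dot_diag (n K : nat) : (K + K + 2 <= n)%nat -> sin_sample_dot n K K = INR (S n) / 2.
Proof.
  intro Hn. rewrite sin_sample_dot_cos.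
  rewrite (sum_f_R0_cos_int_eq0 n (K + K + 2) (INR K + INR K + 2)) by
    (lia || (rewrite !plus_INR; simpl; apply Rabs_pos_eq; pose proof (pos_INR K); lra)).
  rewrite (sum_eq _ (fun _ => 1)); [rewrite sum_cte; field|].
  intros l _. rewrite Rminus_diag, !Rmult_0_l. apply cos_0.
Qed.

Lemma Rabs_sin_sample_dot_le (n K m : nat) : Rabs (sin_sample_dot n K m) <= INR (S n).
Proof.
  unfold sin_sample_dot. eapply Rle_trans; [apply sum_f_R0_triangle|].
  apply Rle_trans with (sum_f_R0 (fun _ => 1) n); [|rewrite sum_cte; lra].
  apply sum_Rle. intros l _. rewrite Rabs_mult.
  pose proof (SIN_bound (2 * PI * (INR K + 1) * (INR l / INR (S n)))).
  pose proof (SIN_bound (2 * PI * (INR m + 1) * (INR l / INR (S n)))).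
  apply Rle_trans with (1 * 1); [|lra].
  apply Rmult_le_compat; try apply Rabs_pos; apply Rabs_le; lra.
Qed.

Lemma sum_f_R0_single (f : nat -> R) (N K : nat) : (K <= N)%nat ->
  (forall m, (m <= N)%nat -> m <> K -> f m = 0) -> sum_f_R0 f N = f K.
Proof.
  intros HK Hz. induction N as [|N IH].
  - assert (K = O) by lia. subst. reflexivity.
  - simpl. destruct (Nat.eq_dec K (S N)) as [->|Hne].
    + rewrite sum_eq_R0; [ring|]. intros m Hm. apply Hz; lia.
    + rewrite IH, (Hz (S N)); [ring| lia| lia| lia| intros; apply Hz; lia].
Qed.

Section SineSeries.

Variable u : nat -> R.
Hypothesis Habs : ex_series (fun m => Rabs (u m)).
Hypothesis Hzero : forall p, Series (fun m => u m * sin (2 * PI * (INR m + 1) * p)) = 0.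

Lemma Series_mult_sin_sample_dot (n K : nat) : Series (fun m => u m * sin_sample_dot n K m) = 0.
Proof.
  set (f := fun l m => sin (2 * PI * (INR K + 1) * (INR l / INR (S n))) *
                       (u m * sin (2 * PI * (INR m + 1) * (INR l / INR (S n))))).
  destruct (sum_f_R0_Series_comm f n) as [_ Hswap].
  { intro l. apply (ex_series_Rabs_le _ (fun m => Rabs (u m))); [|exact Habs]. intro m. unfold f.
    rewrite !Rabs_mult.
    assert (H1 : Rabs (sin (2 * PI * (INR K + 1) * (INR l / INR (S n)))) <= 1) by apply Rabs_le, SIN_bound.
    assert (H2 : Rabs (sin (2 * PI * (INR m + 1) * (INR l / INR (S n)))) <= 1) by apply Rabs_le, SIN_bound.
    apply Rle_trans with (1 * (Rabs (u m) * 1)); [|lra].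
    apply Rmult_le_compat; [apply Rabs_pos| apply Rmult_le_pos; apply Rabs_pos| exact H1|].
    apply Rmult_le_compat_l; [apply Rabs_pos| exact H2]. }
  rewrite (Series_ext _ (fun m => sum_f_R0 (fun l => f l m) n)).
  - rewrite <- Hswap. apply sum_eq_R0. intros l _. unfold f. rewrite Series_scal_l, Hzero. ring.
  - intro m. unfold sin_sample_dot, f. rewrite scal_sum. apply sum_eq. intros; ring.
Qed.

Lemma Rabs_sine_coef_le_tail (K L : nat) :
  Rabs (u K) <= 2 * Series (fun k => Rabs (u (S (K + L) + k)%nat)).
Proof.
  set (n := (K + K + 2 + L)%nat).
  assert (HM : 0 < INR (S n)) by apply lt_0_INR, Nat.lt_0_succ.
  set (T := Series (fun k => Rabs (u (S (K + L) + k)%nat))).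
  assert (Hex : ex_series (fun m => u m * sin_sample_dot n K m)).
  { apply (ex_series_Rabs_le _ (fun m => INR (S n) * Rabs (u m))); [|exact (ex_series_scal_l _ _ Habs)].
    intro m. rewrite Rabs_mult, Rmult_comm. apply Rmult_le_compat_r; [apply Rabs_pos| apply Rabs_sin_sample_dot_le]. }
  assert (Htail_ex : ex_series (fun k => Rabs (u (S (K + L) + k)%nat)))
    by apply (ex_series_incr_n (fun m => Rabs (u m))), Habs.
  assert (Htail : Rabs (Series (fun k => u (S (K + L) + k)%nat * sin_sample_dot n K (S (K + L) + k))) <= INR (S n) * T).
  { unfold T. rewrite <- Series_scal_l.
    assert (Hterm : forall k, Rabs (u (S (K + L) + k)%nat * sin_sample_dot n K (S (K + L) + k)) <=
                             INR (S n) * Rabs (u (S (K + L) + k)%nat)).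
    { intro k. rewrite Rabs_mult, Rmult_comm. apply Rmult_le_compat_r; [apply Rabs_pos| apply Rabs_sin_sample_dot_le]. }
    eapply Rle_trans; [apply Series_Rabs|].
    - eapply ex_series_Rabs_le; [|exact (ex_series_scal_l (INR (S n)) _ Htail_ex)].
      intro k. rewrite Rabs_Rabsolu. apply Hterm.
    - apply Series_le; [|exact (ex_series_scal_l _ _ Htail_ex)]. intro k. split; [apply Rabs_pos| apply Hterm]. }
  pose proof (Series_mult_sin_sample_dot n K) as H0.
  rewrite (Series_incr_n _ (S (K + L))) in H0 by (lia || exact Hex). simpl pred in H0.
  rewrite (sum_f_R0_single _ (K + L) K), sin_sample_dot_diag in H0 by
    (unfold n; lia || (intros m Hm Hne; rewrite sin_sample_dot_off_diag by (unfold n; lia); ring)).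
  assert (Hdiag : Rabs (u K) * (INR (S n) / 2) <= INR (S n) * T).
  { rewrite <- (Rabs_pos_eq (INR (S n) / 2)), <- Rabs_mult by lra.
    replace (u K * (INR (S n) / 2)) with
      (- Series (fun k => u (S (K + L) + k)%nat * sin_sample_dot n K (S (K + L) + k))) by lra.
    rewrite Rabs_Ropp. exact Htail. }
  apply (Rmult_le_reg_r (INR (S n) / 2)); [lra|]. nra.
Qed.

Lemma sine_coef_eq0 (K : nat) : u K = 0.
Proof.
  destruct (Req_dec (u K) 0) as [|Hne]; [assumption| exfalso].
  pose proof (Rabs_pos_lt _ Hne) as Hpos.
  destruct (Un_cv_Series _ Habs (Rabs (u K) / 4)) as [N0 HN0]; [lra|].
  specialize (HN0 (K + N0)%nat ltac:(lia)). pose proof (Rabs_sine_coef_le_tail K N0) as Hbound.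
  rewrite <- (Series_minus_sum (fun m => Rabs (u m))) in Hbound by exact Habs.
  unfold Rdist in HN0. rewrite Rabs_minus_sym in HN0. apply Rabs_def2 in HN0. lra.
Qed.

End SineSeries.

Lemma is_lim_seq_bounded (u : nat -> R) : is_lim_seq u 0 -> exists B, forall n, Rabs (u n) <= B.
Proof.
  intro Hu. apply is_lim_seq_Reals in Hu. destruct (Hu 1 Rlt_0_1) as [N0 HN0].
  exists (1 + sum_f_R0 (fun n => Rabs (u n)) N0). intro n.
  pose proof (cond_pos_sum (fun n => Rabs (u n)) N0 (fun n => Rabs_pos (u n))).
  destruct (Compare_dec.le_lt_dec N0 n) as [Hn|Hn].
  - specialize (HN0 n Hn). unfold Rdist in HN0. rewrite Rminus_0_r in HN0. lra.
  - assert (Hle : (n <= N0)%nat) by lia.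
    pose proof (term_le_sum_f_R0 (fun n => Rabs (u n)) n N0 (fun n => Rabs_pos (u n)) Hle). lra.
Qed.

Lemma ad_inv_distribution_exp_bound (a : nat -> CC) : ad_inv_distribution a ->
  exists B b, 0 <= b /\ forall m, Cmod (a m) <= B * exp (b * (INR m + 1)).
Proof.
  intros [N HN]. destruct (is_lim_seq_bounded _ HN) as [B HB].
  exists B, (2 * INR N). split; [pose proof (pos_INR N); lra|]. intro m.
  pose proof (pos_INR m) as Hm.
  assert (Hpoly : 0 < (1 + INR m ^ 2) ^ N) by (apply pow_lt; nra).
  assert (Hexp : (1 + INR m ^ 2) ^ N <= exp (2 * INR N * (INR m + 1))).
  { replace (2 * INR N * (INR m + 1)) with (INR N * (2 * (INR m + 1))) by ring.
    rewrite exp_mult_INR. apply pow_incr. split; [nra|].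
    replace (2 * (INR m + 1)) with ((INR m + 1) + (INR m + 1)) by ring. rewrite exp_plus.
    pose proof (exp_ineq1_le (INR m + 1)). nra. }
  specialize (HB m). rewrite Rabs_pos_eq in HB by (apply Rdiv_le_0_compat; [apply Cmod_ge_0| exact Hpoly]).
  assert (HB0 : 0 <= B) by (eapply Rle_trans; [|exact HB]; apply Rdiv_le_0_compat; [apply Cmod_ge_0| exact Hpoly]).
  apply Rle_trans with (B * (1 + INR m ^ 2) ^ N); [|apply Rmult_le_compat_l; assumption].
  replace (Cmod (a m)) with (Cmod (a m) / (1 + INR m ^ 2) ^ N * (1 + INR m ^ 2) ^ N) by (field; lra).
  apply Rmult_le_compat_r; [lra| exact HB].
Qed.

Lemma ex_series_exp_gaussian (b c : R) : 0 < c ->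
  ex_series (fun m => exp (b * (INR m + 1) - c * (INR m + 1) ^ 2)).
Proof.
  intro Hc. set (K := exp ((b + 1) ^ 2 / (4 * c)) * exp (-1)).
  apply (ex_series_Rabs_le _ (fun m => K * exp (-1) ^ m)).
  - intro m. rewrite Rabs_pos_eq by (left; apply exp_pos). unfold K.
    rewrite Rmult_assoc, tech_pow_Rmult, <- exp_mult_INR, <- !exp_plus.
    apply exp_le. rewrite S_INR.
    assert (Hsq : 0 <= (2 * c * (INR m + 1) - (b + 1)) ^ 2) by apply pow2_ge_0.
    apply (Rmult_le_reg_l (4 * c)); [lra|].
    replace (4 * c * ((b + 1) ^ 2 / (4 * c) + (INR m + 1) * -1))
      with ((b + 1) ^ 2 - 4 * c * (INR m + 1)) by (field; lra).
    nra.
  - apply (ex_series_scal_l K (fun m => exp (-1) ^ m)), ex_series_geom.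
    pose proof (exp_increasing (-1) 0 ltac:(lra)) as Hq. rewrite exp_0 in Hq.
    rewrite Rabs_pos_eq by (left; apply exp_pos). exact Hq.
Qed.

Definition heat_coef (a : nat -> CC) (tau : CC) (t : R) (m : nat) : CC :=
  Cmult (a m) (cexp (Cmult (Cmult Ci (RtoC (PI * t * cm m))) tau)).

Lemma Cmod_heat_coef (a : nat -> CC) (tau : CC) (t : R) (m : nat) :
  Cmod (heat_coef a tau t m) = Cmod (a m) * exp (- (PI * t * cm m) * Im tau).
Proof.
  unfold heat_coef. rewrite Cmod_mult, Cmod_cexp. do 2 f_equal.
  destruct tau as [t1 t2]. unfold Cmult, Ci, RtoC, Re, Im. simpl. ring.
Qed.

Lemma heat_coef_exp_summable (a : nat -> CC) (tau : CC) (t : R) :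
  0 < Im tau -> 0 < t -> ad_inv_distribution a ->
  forall r, 0 <= r -> ex_series (fun m => Cmod (heat_coef a tau t m) * exp (r * (INR m + 1))).
Proof.
  intros Htau Ht Ha r Hr. pose proof PI_RGT_0.
  destruct (ad_inv_distribution_exp_bound a Ha) as (B & b & Hb & HB).
  set (c := PI * t * Im tau / 2).
  assert (Hc : 0 < c) by (unfold c; apply Rmult_lt_0_compat; [apply Rmult_lt_0_compat; [nra| exact Htau]| lra]).
  apply (ex_series_Rabs_le _ (fun m => B * exp c * exp ((b + r) * (INR m + 1) - c * (INR m + 1) ^ 2))).
  - intro m. rewrite Rabs_pos_eq by (apply Rmult_le_pos; [apply Cmod_ge_0| left; apply exp_pos]).
    rewrite Cmod_heat_coef.
    replace (B * exp c * exp ((b + r) * (INR m + 1) - c * (INR m + 1) ^ 2))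
      with (B * exp (b * (INR m + 1)) * exp (- (PI * t * cm m) * Im tau) * exp (r * (INR m + 1)))
      by (rewrite !Rmult_assoc, <- !exp_plus; f_equal; f_equal; unfold c, cm; field).
    apply Rmult_le_compat_r; [left; apply exp_pos|].
    apply Rmult_le_compat_r; [left; apply exp_pos| apply HB].
  - exact (ex_series_scal_l (B * exp c) _ (ex_series_exp_gaussian (b + r) c Hc)).
Qed.

(* [heat_sigma] is [H(z) = C^τ_t(ψ)(d z) σ(z)] flattened into a single series
   [Σ_j c_j e^{2πi ν_j z}] by interleaving the two exponentials of each telescoped term. *)
Definition sigma_freq : nat -> R := interleave (fun m => INR m + 1) (fun m => - (INR m + 1)).

Definition heat_sigma_coef (a : nat -> CC) (tau : CC) (t : R) : nat -> CC :=
  interleave (heat_coef a tau t) (fun m => Copp (heat_coef a tau t m)).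

Definition heat_sigma_term (a : nat -> CC) (tau : CC) (t : R) (z : CC) (j : nat) : CC :=
  Cmult (heat_sigma_coef a tau t j) (exp2pi (sigma_freq j) z).

Definition heat_sigma (a : nat -> CC) (tau : CC) (t : R) (z : CC) : CC :=
  CSeries (heat_sigma_term a tau t z).

Lemma heat_sigma_term_interleave (a : nat -> CC) (tau : CC) (t : R) (z : CC) (j : nat) :
  heat_sigma_term a tau t z j =
  interleave (fun m => Cmult (heat_coef a tau t m) (exp2pi (INR m + 1) z))
             (fun m => Cmult (Copp (heat_coef a tau t m)) (exp2pi (- (INR m + 1)) z)) j.
Proof. unfold heat_sigma_term, heat_sigma_coef, sigma_freq, interleave. destruct (Nat.even j); reflexivity. Qed.

Lemma sin_INR_mult_PI (n : nat) : sin (INR n * PI) = 0.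
Proof. apply sin_eq_0_1. exists (Z.of_nat n). rewrite INR_IZR_INZ. reflexivity. Qed.

Lemma sin_sigma_freq_half (j : nat) : sin (2 * PI * sigma_freq j * (1 / 2)) = 0.
Proof.
  unfold sigma_freq, interleave. rewrite <- S_INR. destruct (Nat.even j).
  - rewrite <- (sin_INR_mult_PI (S (Nat.div2 j))). f_equal. field.
  - rewrite <- (Ropp_0), <- (sin_INR_mult_PI (S (Nat.div2 j))), <- sin_neg. f_equal. field.
Qed.

Lemma heat_sigma_shift_Im (a : nat -> CC) (tau : CC) (t x y0 y : R) :
  CSeries (fun j => Cmult (heat_sigma_term a tau t (x, y0) j) (RtoC (exp (- (2 * PI * sigma_freq j) * y)))) =
  heat_sigma a tau t (x, y0 + y).
Proof.
  apply CSeries_ext. intro j. unfold heat_sigma_term. rewrite <- Cmult_assoc, exp2pi_shift_Im. reflexivity.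
Qed.

Lemma heat_sigma_shift_half (a : nat -> CC) (tau : CC) (t x y : R) :
  CSeries (fun j => Cmult (heat_sigma_term a tau t (x, y) j) (RtoC (cos (- (2 * PI * sigma_freq j) * (1 / 2))))) =
  heat_sigma a tau t (x + 1 / 2, y).
Proof.
  apply CSeries_ext. intro j. unfold heat_sigma_term.
  rewrite Ropp_mult_distr_l_reverse, cos_neg, <- Cmult_assoc, exp2pi_shift_Re by apply sin_sigma_freq_half.
  reflexivity.
Qed.

Section HeatSigma.

Variables (a : nat -> CC) (tau : CC) (t : R).
Hypothesis Hcoef : forall r, 0 <= r ->
  ex_series (fun m => Cmod (heat_coef a tau t m) * exp (r * (INR m + 1))).

Lemma exp_summable_heat_sigma (x y0 : R) :
  exp_summable (heat_sigma_term a tau t (x, y0)) (fun j => - (2 * PI * sigma_freq j)).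
Proof.
  intros r Hr. pose proof PI_RGT_0 as Hpi. pose proof (Rabs_pos y0) as Hy0.
  set (h := fun m => Cmod (heat_coef a tau t m) * exp (2 * PI * (r + Rabs y0) * (INR m + 1))).
  assert (Hbound : forall (c : CC) (s : R) (m : nat), Rabs s = INR m + 1 -> Cmod c = Cmod (heat_coef a tau t m) ->
    Cmod (Cmult c (exp2pi s (x, y0))) * exp (r * Rabs (- (2 * PI * s))) <= h m).
  { intros c s m Hs Hc. unfold h. rewrite Cmod_mult, Cmod_exp2pi, Hc, Rmult_assoc, <- exp_plus.
    apply Rmult_le_compat_l; [apply Cmod_ge_0|]. apply exp_le. simpl Im.
    rewrite Rabs_Ropp, Rabs_mult, Rabs_mult, Hs, (Rabs_pos_eq 2), (Rabs_pos_eq PI) by lra.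
    assert (- s * y0 <= Rabs s * Rabs y0).
    { rewrite <- Rabs_mult, <- Rabs_Ropp. replace (- s * y0) with (- (s * y0)) by ring. apply Rle_abs. }
    rewrite Hs in H. nra. }
  apply (ex_series_Rabs_le _ (interleave h h)).
  - intro j. rewrite Rabs_pos_eq by (apply Rmult_le_pos; [apply Cmod_ge_0| left; apply exp_pos]).
    unfold heat_sigma_term, heat_sigma_coef, sigma_freq.
    destruct (Nat.Even_or_Odd j) as [[m ->]|[m ->]].
    + rewrite !interleave_double. apply Hbound; [apply Rabs_pos_eq; pose proof (pos_INR m); lra| reflexivity].
    + replace (2 * m + 1)%nat with (S (2 * m)) by lia. rewrite !interleave_succ_double.
      apply Hbound; [rewrite Rabs_Ropp; apply Rabs_pos_eq; pose proof (pos_INR m); lra| apply Cmod_opp].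
  - assert (Hh0 : forall m, 0 <= h m) by (intro; apply Rmult_le_pos; [apply Cmod_ge_0| left; apply exp_pos]).
    assert (Hh : ex_series h) by (apply Hcoef; nra).
    apply ex_series_interleave; assumption.
Qed.

Lemma heat_sigma_pairs (z : CC) : heat_sigma a tau t z =
  CSeries (fun m => Cmult (heat_coef a tau t m) (Cminus (exp2pi (INR m + 1) z) (exp2pi (- (INR m + 1)) z))).
Proof.
  destruct z as [x y0]. unfold heat_sigma.
  rewrite (CSeries_ext _ _ (heat_sigma_term_interleave a tau t (x, y0))), CSeries_interleave.
  - apply CSeries_ext. intro m. ring.
  - eapply ex_series_ext; [|apply (ex_series_Cmod_of_exp_summable _ _ (exp_summable_heat_sigma x y0))].
    intro j. cbv beta. rewrite heat_sigma_term_interleave. reflexivity.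
Qed.

Lemma heat_op_mult_sigma (z : CC) : Cmult (heat_op a tau t z) (Defs.sigma z) = heat_sigma a tau t z.
Proof.
  change (heat_op a tau t z) with (CSeries (heat_term a tau t z)).
  rewrite CSeries_mult_r, heat_sigma_pairs.
  - apply CSeries_ext. intro m. unfold heat_term. rewrite <- Cmult_assoc, chi_d_mult_sigma. reflexivity.
  - apply (ex_series_Rabs_le _ (fun m => Cmod (heat_coef a tau t m) * exp ((2 * PI * Rabs (Im z) + 1) * (INR m + 1)))).
    + intro m. rewrite Rabs_pos_eq by apply Cmod_ge_0. unfold heat_term. rewrite Cmod_mult.
      apply Rmult_le_compat_l; [apply Cmod_ge_0| apply Cmod_chi_d_le].
    + apply Hcoef. pose proof PI_RGT_0. pose proof (Rabs_pos (Im z)). nra.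
Qed.

Lemma weighted_density_heat_sigma (z : CC) : weighted_density a tau t z =
  Cmod (heat_sigma a tau t z) ^ 2 * exp (- (4 * PI / (t * Im tau)) * Im z ^ 2).
Proof. unfold weighted_density. rewrite <- heat_op_mult_sigma, Cmod_mult. ring. Qed.

Lemma heat_sigma_real_axis (p : R) : heat_sigma a tau t (p, 0) =
  (-2 * Series (fun m => Im (heat_coef a tau t m) * sin (2 * PI * (INR m + 1) * p)),
    2 * Series (fun m => Re (heat_coef a tau t m) * sin (2 * PI * (INR m + 1) * p))).
Proof.
  rewrite heat_sigma_pairs. unfold CSeries. rewrite <- !Series_scal_l.
  f_equal; apply Series_ext; intro m; rewrite !exp2pi_xy;
    replace (2 * PI * - (INR m + 1) * p) with (- (2 * PI * (INR m + 1) * p)) by ring;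
    rewrite cos_neg, sin_neg, !Rmult_0_r, exp_0;
    destruct (heat_coef a tau t m) as [b1 b2]; unfold Cmult, Cminus, Cplus, Copp, Re, Im; simpl; ring.
Qed.

Lemma heat_sigma_quasi_periodic :
  (forall z, weighted_density a tau t (Cplus z tau) = weighted_density a tau t z) ->
  forall x y, Cmod (heat_sigma a tau t (x + Re tau, Im tau + y)) ^ 2 *
                exp (- (4 * PI / (t * Im tau)) * (Im tau + y) ^ 2) =
              Cmod (heat_sigma a tau t (x, y)) ^ 2 * exp (- (4 * PI / (t * Im tau)) * y ^ 2).
Proof.
  intros Hinv x y. specialize (Hinv (x, y)). rewrite !weighted_density_heat_sigma in Hinv.
  replace (Cplus (x, y) tau) with (x + Re tau, Im tau + y) in Hinv
    by (unfold Cplus, Re, Im; simpl; f_equal; ring).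
  exact Hinv.
Qed.

Lemma heat_sigma_cos_invariant : 0 < Im tau -> 0 < t ->
  (forall z, weighted_density a tau t (Cplus z tau) = weighted_density a tau t z) ->
  forall p, cos (4 * PI / t) * Cmod (heat_sigma a tau t (p, 0)) ^ 2 = Cmod (heat_sigma a tau t (p, 0)) ^ 2.
Proof.
  intros Htau Ht Hinv p. pose proof (heat_sigma_quasi_periodic Hinv) as Hperiod.
  set (t1 := Re tau) in *. set (t2 := Im tau) in *.
  set (H := heat_sigma a tau t) in *.
  set (kappa := 4 * PI / (t * t2)) in *.
  set (om := fun j => - (2 * PI * sigma_freq j)).
  (* [e^{-κ (t2 + y)²} = cL e^{sL y} e^{-κ y²}] *)
  set (cL := exp (- kappa * t2 ^ 2)).
  set (sL := - (8 * PI / t)).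
  (* the continuation to [y = i/2] below shifts the abscissa by [1/2] *)
  set (x := p - 1 / 2).
  set (gL := heat_sigma_term a tau t (x + t1, t2)).
  set (gR := heat_sigma_term a tau t (x, 0)).
  assert (Hsin : forall j, sin (om j * (1 / 2)) = 0).
  { intro j. unfold om. rewrite Ropp_mult_distr_l_reverse, sin_neg, sin_sigma_freq_half. ring. }
  assert (Hexp_sum : forall y, exp_sum (gram_weight cL gL) (gram_exponent sL om) y =
                               exp_sum (gram_weight 1 gR) (gram_exponent 0 om) y).
  { intro y. rewrite !exp_sum_gram by apply exp_summable_heat_sigma.
    unfold gL, gR, om. rewrite !heat_sigma_shift_Im. fold H.
    apply (Rmult_eq_reg_r (exp (- kappa * y ^ 2))); [|apply Rgt_not_eq, exp_pos].
    rewrite Rmult_0_l, exp_0, !Rmult_1_l, Rplus_0_l, <- Hperiod.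
    replace (cL * exp (sL * y) * Cmod (H (x + t1, t2 + y)) ^ 2 * exp (- kappa * y ^ 2))
      with (Cmod (H (x + t1, t2 + y)) ^ 2 * (cL * exp (sL * y) * exp (- kappa * y ^ 2))) by ring.
    unfold cL, sL. rewrite <- !exp_plus. do 2 f_equal. unfold kappa. field. lra. }
  pose proof (cos_sum_eq_of_exp_sum_eq _ _ _ _
    (exp_dominated_gram cL sL gL om (exp_summable_heat_sigma _ _))
    (exp_dominated_gram 1 0 gR om (exp_summable_heat_sigma _ _)) Hexp_sum (1 / 2)) as Hcos.
  rewrite !cos_sum_gram in Hcos by (apply exp_summable_heat_sigma || exact Hsin).
  unfold gL, gR, om in Hcos. rewrite !heat_sigma_shift_half in Hcos. fold H in Hcos.
  replace (x + t1 + 1 / 2) with (x + 1 / 2 + t1) in Hcos by ring.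
  replace (x + 1 / 2) with p in Hcos by (unfold x; ring).
  pose proof (Hperiod p 0) as H0. rewrite Rplus_0_r in H0.
  replace (- kappa * 0 ^ 2) with 0 in H0 by ring. rewrite exp_0, Rmult_1_r in H0.
  replace (sL * (1 / 2)) with (- (4 * PI / t)) in Hcos by (unfold sL; field; lra).
  rewrite cos_neg, Rmult_0_l, cos_0, !Rmult_1_l in Hcos. fold cL in H0.
  rewrite <- H0 at 1. rewrite <- Hcos. ring.
Qed.

Lemma heat_coef_eq0_of_real_axis :
  (forall p, heat_sigma a tau t (p, 0) = RtoC 0) -> forall m, heat_coef a tau t m = RtoC 0.
Proof.
  intros Hzero m.
  assert (Habs : ex_series (fun m => Cmod (heat_coef a tau t m))).
  { eapply ex_series_ext; [|apply (Hcoef 0 (Rle_refl 0))].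
    intro k. cbv beta. rewrite Rmult_0_l, exp_0. apply Rmult_1_r. }
  assert (HRe : forall p, Series (fun m => Re (heat_coef a tau t m) * sin (2 * PI * (INR m + 1) * p)) = 0).
  { intro p. pose proof (f_equal snd (Hzero p)) as H. rewrite heat_sigma_real_axis in H.
    unfold RtoC in H. cbn [fst snd] in H. lra. }
  assert (HIm : forall p, Series (fun m => Im (heat_coef a tau t m) * sin (2 * PI * (INR m + 1) * p)) = 0).
  { intro p. pose proof (f_equal fst (Hzero p)) as H. rewrite heat_sigma_real_axis in H.
    unfold RtoC in H. cbn [fst snd] in H. lra. }
  apply injective_projections.
  - exact (sine_coef_eq0 _ (ex_series_Rabs_Re _ Habs) HRe m).
  - exact (sine_coef_eq0 _ (ex_series_Rabs_Im _ Habs) HIm m).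
Qed.

End HeatSigma.

Lemma cos_4PI_div_neq_1 (t : R) : 0 < t ->
  ~ (exists n : nat, (0 < n)%nat /\ 2 / t = INR n) -> cos (4 * PI / t) <> 1.
Proof.
  intros Ht Hn Hc. apply Hn. pose proof PI_RGT_0.
  replace (4 * PI / t) with (2 * (2 * PI / t)) in Hc by (field; lra).
  rewrite cos_2a_sin in Hc.
  assert (Hs : sin (2 * PI / t) = 0) by nra.
  destruct (sin_eq_0_0 _ Hs) as [k Hk].
  assert (Hk2 : 2 / t = IZR k) by (apply (Rmult_eq_reg_r PI); [rewrite <- Hk; field|]; lra).
  assert (Hpos : (0 < k)%Z) by (apply lt_0_IZR; rewrite <- Hk2; apply Rdiv_lt_0_compat; lra).
  exists (Z.to_nat k). split; [lia|].
  rewrite Hk2, INR_IZR_INZ, Z2Nat.id by lia. reflexivity.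
Qed.

Lemma heat_coef_eq0 (a : nat -> CC) (tau : CC) (t : R) (m : nat) :
  heat_coef a tau t m = RtoC 0 -> a m = RtoC 0.
Proof.
  intro H. apply Cmod_eq_0. pose proof (Cmod_heat_coef a tau t m) as Hmod.
  rewrite H, Cmod_0 in Hmod. pose proof (exp_pos (- (PI * t * cm m) * Im tau)).
  destruct (Rmult_integral _ _ (eq_sym Hmod)); [assumption| lra].
Qed.

Theorem lemma5p14 (tau : CC) (t : R) (a : nat -> CC) :
  0 < Im tau ->
  0 < t ->
  ~ (exists n : nat, (0 < n)%nat /\ 2 / t = INR n) ->
  ad_inv_distribution a ->
  (forall z : CC, weighted_density a tau t (Cplus z tau) = weighted_density a tau t z) ->
  forall m : nat, a m = RtoC 0.
Proof.
  intros Htau Ht Hint Ha Hinv m.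
  pose proof (heat_coef_exp_summable a tau t Htau Ht Ha) as Hcoef.
  apply (heat_coef_eq0 a tau t), (heat_coef_eq0_of_real_axis a tau t Hcoef). intro p.
  pose proof (heat_sigma_cos_invariant a tau t Hcoef Htau Ht Hinv p) as Hcos.
  pose proof (cos_4PI_div_neq_1 t Ht Hint) as Hne1.
  apply Cmod_eq_0. apply Rsqr_0_uniq. rewrite Rsqr_pow2.
  apply (Rmult_eq_reg_l (cos (4 * PI / t) - 1)); [lra|]. intro. apply Hne1. lra.
Qed.
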